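(* Let $X$ and $Y$ be linearly stable sequence classes with $Y$ spherically complete and $X(\mathbb{K})\subseteq Y^{\rm dual}(\mathbb{K})$ with $\|\cdot\|_{Y^{\rm dual}(\mathbb{K})}\le\|\cdot\|_{X(\mathbb{K})}$. Let $E,F$ be Banach spaces, $T\in\mathcal{L}(E;F)$, and suppose $\alpha_{X,Y}$ is a reasonable quasi-norm on $E\otimes F^*$. (a) If $T\in\mathcal{L}_{X;Y^{\rm dual}}(E;F)$, then $\varphi_T\colon E\otimes_{\alpha_{X,Y}}F^*\to\mathbb{K}$ is continuous and $\|\varphi_T\|\le\|T\|_{X;Y^{\rm dual}}$. (b) If, in addition, $X$ and $Y$ are finitely determined or finitely dominated, then $\varphi_T\colon E\otimes_{\alpha_{X,Y}}F^*\to\mathbb{K}$ is continuous if and only if $T\in\mathcal{L}_{X;Y^{\rm dual}}(E;F)$, and in this case $\|T\|_{X;Y^{\rm dual}}=\|\varphi_T\|$.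
   Context: All Banach spaces are over $\mathbb{K}=\mathbb{R}$ or $\mathbb{C}$; $\mathcal{L}(E;F)$ is the space of bounded linear operators. A sequence class is a rule $X$ assigning to each Banach space $E$ a Banach space $X(E)$ which is a vector subspace of $E^{\mathbb{N}}$ (coordinatewise operations) with $c_{00}(E)\subseteq X(E)$, $\|(x_j)\|_\infty\le\|(x_j)\|_{X(E)}$, and $\|x\cdot e_j\|_{X(E)}=\|x\|_E$ ($x$ in the $j$-th coordinate, zeros elsewhere). $(x_j)_{j=1}^n$ denotes $(x_1,\dots,x_n,0,0,\dots)$. For sequence classes $X,Y$, $T\in\mathcal{L}(E;F)$ is $(X;Y)$-summing if $(T(x_j))_j\in Y(F)$ whenever $(x_j)_j\in X(E)$; then $\|T\|_{X;Y}$ is the operator norm of $(x_j)\mapsto(T x_j)$ from $X(E)$ to $Y(F)$, and $\mathcal{L}_{X;Y}(E;F)$ is the space of such operators. $X$ is linearly stable if every $T\in\mathcal{L}(E;F)$ is $(X;X)$-summing with $\|T\|_{X;X}=\|T\|$, for all $E,F$. $X$ is spherically complete if $(\lambda_jx_j)\in X(E)$ with the same norm whenever $(x_j)\in X(E)$ and $|\lambda_j|=1$ for all $j$. The dual class: $Y^{\rm dual}(E)$ is the set of $(x_j)\in E^{\mathbb{N}}$ such that $\sum_j\varphi_j(x_j)$ converges for all $(\varphi_j)\in Y(E^* )$, with norm $\|(x_j)\|_{Y^{\rm dual}}=\sup_{(\varphi_j)\in B_{Y(E^* )}}\sum_j|\varphi_j(x_j)|$. $X$ is finitely determined if for every $(x_j)\in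 E^{\mathbb{N}}$: $(x_j)\in X(E)$ iff $\sup_k\|(x_j)_{j=1}^k\|_{X(E)}<\infty$, and then $\|(x_j)\|_{X(E)}=\sup_k\|(x_j)_{j=1}^k\|_{X(E)}$. $X$ is finitely dominated if there is a finitely determined sequence class $Z$ such that for every $E$, $X(E)$ is a closed subspace of $Z(E)$ and either (i) for $(x_j)\in Z(E)$: $(x_j)\in X(E)$ iff $\lim_k\|(x_j)_{j=k}^\infty\|_{Z(E)}=0$, or (ii) for $(x_j)\in Z(E)$: $(x_j)\in X(E)$ iff $\lim_{k,l}\|(x_j)_{j=k}^l\|_{Z(E)}=0$. For $u\in E\otimes F$, $\alpha_{X,Y}(u)=\inf\{\|(x_j)_{j=1}^n\|_{X(E)}\|(y_j)_{j=1}^n\|_{Y(F)}:u=\sum_{j=1}^nx_j\otimes y_j\}$; a quasi-norm $\alpha$ is reasonable if $\varepsilon\le\alpha$ ($\varepsilon$ the injective tensor norm) and $\alpha(x\otimes y)\le\|x\|\|y\|$. For a linear $T\colon E\to F$, $\varphi_T\colon E\otimes F^*\to\mathbb{K}$ is the linear functional with $\varphi_T(\sum_{j=1}^n x_j\otimes\psi_j)=\sum_{j=1}^n\psi_j(T(x_j))$. *)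

From HB Require Import structures.
From mathcomp Require Import all_boot all_order all_algebra.
From mathcomp Require Import boolp classical_sets functions reals constructive_ereal ereal sequences.
From mathcomp Require Import complex.


Unset Strict Implicit.
Unset Printing Implicit Defensive.

Import Order.TTheory GRing.Theory Num.Theory.
Local Open Scope ring_scope.
Local Open Scope classical_set_scope.

Record scal (R : realType) := Scal {
  sK :> fieldType;
  kabs : sK -> R;
  kabs0 : kabs 0 = 0;
  kabs_ge0 : forall a, 0 <= kabs a;
  kabsM : forall a b, kabs (a * b) = kabs a * kabs b;
  kabsD : forall a b, kabs (a + b) <= kabs a + kabs b }.
Arguments Scal {R} sK kabs kabs0 kabs_ge0 kabsM kabsD.
Arguments sK {R} s.
Arguments kabs {R} s _.
Arguments kabs0 {R} s.
Arguments kabs_ge0 {R} s a.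
Arguments kabsM {R} s a b.
Arguments kabsD {R} s a b.

Definition realS (R : realType) : scal R :=
  @Scal R R (fun x => `|x|) (normr0 _) (fun x => normr_ge0 x)
    (fun x y => normrM x y) (fun x y => ler_normD x y).

Definition complexS (R : realType) : scal R :=
  @Scal R (R[i] : fieldType) (@Normc.normc R) (@Normc.normc0 R)
    (fun x => match x with Complex a b => sqrtr_ge0 _ end)
    (@Normc.normcM R) (@le_normcD R).

Record nspace (R : realType) (S : scal R) := NSpace {
  ncar :> lmodType S;
  nrm : ncar -> R }.

Arguments nspace {R} S.
Arguments NSpace {R S} ncar nrm.
Arguments ncar {R S} n.
Arguments nrm {R S} n _.

Set Implicit Arguments.

Section Spaces.
Context {R : realType} {S : scal R}.
Local Notation K := (sK S).
Local Notation kabs := (kabs S).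

Definition is_norm (E : nspace S) : Prop :=
  [/\ forall x : E, nrm E x = 0 <-> x = 0,
      forall (a : K) (x : E), nrm E (a *: x) = kabs a * nrm E x
    & forall x y : E, nrm E (x + y) <= nrm E x + nrm E y].

Definition complete (E : nspace S) : Prop :=
  forall u : nat -> E,
    (forall e : R, 0 < e -> exists N, forall m n, (N <= m)%N -> (N <= n)%N ->
        nrm E (u m - u n) < e) ->
    exists l : E, forall e : R, 0 < e -> exists N, forall n, (N <= n)%N ->
        nrm E (u n - l) < e.

Definition banach (E : nspace S) : Prop := is_norm E /\ complete E.

Definition kspace : nspace S := @NSpace R S (K^o) kabs.

Definition bdlin (E : nspace S) : {pred E -> K^o} :=
  fun f => `[< linear f /\ exists C : R, forall x, kabs (f x) <= C * nrm E x >].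

Arguments bdlin : clear implicits.

Lemma bdlin_submod (E : nspace S) : GRing.submod_closed (bdlin E).
Proof.
split.
  apply/asboolP; split.
    by move=> a u v; rewrite /= !scaler0 addr0.
  by exists 0 => x; rewrite mul0r /= (kabs0 S).
move=> a f g /asboolP [lf [C1 hC1]] /asboolP [lg [C2 hC2]].
apply/asboolP; split.
  move=> b u v; rewrite !fctE lf lg.
  by rewrite !scalerDr !scalerA [a * b]mulrC addrACA.
exists (kabs a * C1 + C2) => x /=.
rewrite !fctE; apply: (le_trans (kabsD S _ _)).
rewrite mulrDl; apply: lerD => //.
rewrite [_ *: _]/(_ * _) (kabsM S) -mulrA.
by apply: ler_wpM2l; [exact: (kabs_ge0 S)|].
Qed.

HB.instance Definition _ (E : nspace S) :=
  GRing.isSubmodClosed.Build _ _ (bdlin E) (bdlin_submod E).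

Definition dualT (E : nspace S) := {f : E -> K^o | f \in bdlin E}.

HB.instance Definition _ (E : nspace S) := [isSub for (@sval _ _ : dualT E -> _)].
HB.instance Definition _ (E : nspace S) := [Choice of dualT E by <:].
HB.instance Definition _ (E : nspace S) := [SubChoice_isSubLmodule of dualT E by <:].

Definition dnorm (E : nspace S) (f : dualT E) : R :=
  sup [set kabs (sval f x) | x in [set x : E | nrm E x <= 1]].

Definition dual (E : nspace S) : nspace S := @NSpace R S (dualT E) (@dnorm E).

Definition fapp (E : nspace S) (f : dual E) (x : E) : K := sval f x.

End Spaces.

(* A sequence class X is a rule assigning to each (Banach) space E a set    *)
(* X(E) of sequences (sc_mem X E) together with a norm (sc_norm X E),       *)
(* valued in the extended reals for convenience.  The axioms of a sequence  *)
(* class are collected in [is_seqclass]; they are only required for Banach  *)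
(* spaces E (values of X on non-Banach spaces are irrelevant).              *)

Record seqclass (R : realType) (S : scal R) := SeqClass {
  sc_mem : forall E : nspace S, (nat -> E) -> Prop;
  sc_norm : forall E : nspace S, (nat -> E) -> \bar R }.
Arguments seqclass {R} S.
Arguments SeqClass {R S} sc_mem sc_norm.
Arguments sc_mem {R S} s E _.
Arguments sc_norm {R S} s E _.

Section SeqClasses.
Context {R : realType} {S : scal R}.
Local Notation K := (sK S).
Local Notation kabs := (kabs S).
Local Open Scope ereal_scope.

Definition seq_at (E : nspace S) (x : E) (j : nat) : nat -> E :=
  fun i => if i == j then x else 0%R.

(* (x_j)_{j=1}^k : the first k terms, then zeros *)
Definition trunc (E : nspace S) (k : nat) (x : nat -> E) : nat -> E :=
  fun j => if (j < k)%N then x j else 0%R.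

Definition tailseq (E : nspace S) (k : nat) (x : nat -> E) : nat -> E :=
  fun j => if (k <= j)%N then x j else 0%R.

Definition segseq (E : nspace S) (k l : nat) (x : nat -> E) : nat -> E :=
  fun j => if (k <= j <= l)%N then x j else 0%R.

Definition is_seqclass (X : seqclass S) : Prop :=
  forall E : nspace S, banach E ->
  [/\
      sc_mem X E 0%R /\
      (forall (a : K) (x y : nat -> E), sc_mem X E x -> sc_mem X E y ->
         sc_mem X E (a *: x + y)%R),
      (forall x : nat -> E, (exists n, forall j, (n <= j)%N -> x j = 0%R) ->
         sc_mem X E x),
      [/\ forall x, sc_mem X E x -> sc_norm X E x \is a fin_num,
          forall x, sc_mem X E x -> (sc_norm X E x = 0 <-> x = 0%R),
          forall (a : K) x, sc_mem X E x ->
            sc_norm X E (a *: x)%R = (kabs a)%:E * sc_norm X E x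
        & forall x y, sc_mem X E x -> sc_mem X E y ->
            sc_norm X E (x + y)%R <= sc_norm X E x + sc_norm X E y],
      (forall w : nat -> nat -> E, (forall n, sc_mem X E (w n)) ->
         (forall e : R, (0 < e)%R -> exists N, forall m n, (N <= m)%N -> (N <= n)%N ->
            sc_norm X E (w m - w n)%R < e%:E) ->
         exists l, sc_mem X E l /\
           forall e : R, (0 < e)%R -> exists N, forall n, (N <= n)%N ->
             sc_norm X E (w n - l)%R < e%:E) /\
      (forall x, sc_mem X E x -> forall j, (nrm E (x j))%:E <= sc_norm X E x)
    &
      (forall (x : E) j, sc_mem X E (seq_at x j) /\
                         sc_norm X E (seq_at x j) = (nrm E x)%:E)].

Definition bounded_op (E F : nspace S) (T : E -> F) : Prop :=
  linear T /\ exists C : R, forall x, (nrm F (T x) <= C * nrm E x)%R.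

Definition opnorm (E F : nspace S) (T : E -> F) : \bar R :=
  ereal_sup [set (nrm F (T x))%:E | x in [set x : E | (nrm E x <= 1)%R]].

Definition summing (X Y : seqclass S) (E F : nspace S) (T : E -> F) : Prop :=
  forall x : nat -> E, sc_mem X E x -> sc_mem Y F (T \o x).

Definition sumnorm (X Y : seqclass S) (E F : nspace S) (T : E -> F) : \bar R :=
  ereal_sup [set sc_norm Y F (T \o x) |
             x in [set x : nat -> E | sc_mem X E x /\ sc_norm X E x <= 1]].

Definition linearly_stable (X : seqclass S) : Prop :=
  forall E F : nspace S, banach E -> banach F -> forall T : E -> F,
    bounded_op T -> summing X X T /\ sumnorm X X T = opnorm T.

Definition spherically_complete (X : seqclass S) : Prop :=
  forall E : nspace S, banach E -> forall (x : nat -> E) (l : nat -> K),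
    sc_mem X E x -> (forall j, kabs (l j) = 1%R) ->
    sc_mem X E (fun j => l j *: x j)%R /\
    sc_norm X E (fun j => l j *: x j)%R = sc_norm X E x.

Definition ksum_to (a : nat -> K) (l : K) : Prop :=
  forall e : R, (0 < e)%R -> exists N, forall n, (N <= n)%N ->
    (kabs (\sum_(j < n) a j - l) < e)%R.

Definition dual_class (Y : seqclass S) : seqclass S :=
  SeqClass
    (fun E x => forall phi : nat -> dual E, sc_mem Y (dual E) phi ->
        exists l : K, ksum_to (fun j => fapp (phi j) (x j)) l)
    (fun E x => ereal_sup
        [set (\sum_(0 <= j <oo) (kabs (fapp (phi j) (x j)))%:E) |
         phi in [set phi : nat -> dual E |
                 sc_mem Y (dual E) phi /\ sc_norm Y (dual E) phi <= 1]]).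

Definition fin_determined (X : seqclass S) : Prop :=
  forall E : nspace S, banach E -> forall x : nat -> E,
    (sc_mem X E x <-> ereal_sup (range (fun k => sc_norm X E (trunc k x))) < +oo) /\
    (sc_mem X E x ->
       sc_norm X E x = ereal_sup (range (fun k => sc_norm X E (trunc k x)))).

Definition closed_subspace (X Z : seqclass S) (E : nspace S) : Prop :=
  (forall x, sc_mem X E x -> sc_mem Z E x /\ sc_norm X E x = sc_norm Z E x) /\
  (forall (w : nat -> nat -> E) (x : nat -> E),
     (forall n, sc_mem X E (w n)) -> sc_mem Z E x ->
     (forall e : R, (0 < e)%R -> exists N, forall n, (N <= n)%N ->
        sc_norm Z E (w n - x)%R < e%:E) ->
     sc_mem X E x).

Definition fin_dominated (X : seqclass S) : Prop :=
  exists Z : seqclass S, is_seqclass Z /\ fin_determined Z /\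
    forall E : nspace S, banach E ->
      closed_subspace X Z E /\
      ((forall x, sc_mem Z E x ->
          (sc_mem X E x <->
             forall e : R, (0 < e)%R -> exists N, forall k, (N <= k)%N ->
               sc_norm Z E (tailseq k x) < e%:E)) \/
       (forall x, sc_mem Z E x ->
          (sc_mem X E x <->
             forall e : R, (0 < e)%R -> exists N, forall k l, (N <= k)%N -> (N <= l)%N ->
               sc_norm Z E (segseq k l x) < e%:E))).

(* Algebraic tensor product E (x) G, represented by finite lists of         *)
(* elementary tensors; two lists represent the same tensor iff every        *)
(* bilinear form takes the same value on them (universal property).         *)

Definition tens (E G : nspace S) := seq (E * G).

Definition bilinear_form (E G : nspace S) (B : E -> G -> K^o) : Prop :=
  (forall y : G, linear (fun x : E => B x y)) /\ (forall x : E, linear (B x)).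

Definition tens_eq (E G : nspace S) (u v : tens E G) : Prop :=
  forall B : E -> G -> K^o, bilinear_form B ->
    (\sum_(p <- u) B p.1 p.2 = \sum_(p <- v) B p.1 p.2)%R.

Definition tens_scale (E G : nspace S) (a : K) (u : tens E G) : tens E G :=
  map (fun p => (a *: p.1, p.2)%R) u.

Definition tens_add (E G : nspace S) (u v : tens E G) : tens E G := u ++ v.

Definition tens_sub (E G : nspace S) (u v : tens E G) : tens E G :=
  u ++ tens_scale (-1)%R v.

Definition alphaXY (X Y : seqclass S) (E G : nspace S) (u : tens E G) : \bar R :=
  ereal_inf [set sc_norm X E (fun j => nth 0%R (map fst v) j) *
                 sc_norm Y G (fun j => nth 0%R (map snd v) j) |
             v in [set v : tens E G | tens_eq v u]].

Definition quasi_norm (E G : nspace S) (a : tens E G -> \bar R) : Prop :=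
  [/\ forall u v, tens_eq u v -> a u = a v,
      forall u, a u \is a fin_num,
      forall u, a u = 0 <-> tens_eq u [::],
      forall (l : K) u, a (tens_scale l u) = (kabs l)%:E * a u
    & exists C : R, (1 <= C)%R /\
        forall u v, a (tens_add u v) <= C%:E * (a u + a v)].

Definition eps_norm (E F : nspace S) (u : tens E (dual F)) : \bar R :=
  ereal_sup [set (kabs (\sum_(p <- u) fapp pg.1 p.1 * fapp pg.2 p.2)%R)%:E |
             pg in [set pg : dual E * dual (dual F) |
                    (nrm (dual E) pg.1 <= 1)%R /\ (nrm (dual (dual F)) pg.2 <= 1)%R]].

Definition reasonable_qnorm (E F : nspace S) (a : tens E (dual F) -> \bar R) : Prop :=
  [/\ quasi_norm a,
      forall u, eps_norm u <= a u
    & forall (x : E) (y : dual F), a [:: (x, y)] <= (nrm E x * nrm (dual F) y)%:E].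

Definition phiT (E F : nspace S) (T : E -> F) (u : tens E (dual F)) : K :=
  (\sum_(p <- u) fapp p.2 (T p.1))%R.

Definition qcontinuous (E G : nspace S) (a : tens E G -> \bar R) (f : tens E G -> K) : Prop :=
  forall u0 : tens E G, forall e : R, (0 < e)%R -> exists2 d : R, (0 < d)%R &
    forall u, a (tens_sub u u0) < d%:E -> (kabs (f u - f u0) < e)%R.

Definition qfnorm (E G : nspace S) (a : tens E G -> \bar R) (f : tens E G -> K) : \bar R :=
  ereal_sup [set (kabs (f u))%:E | u in [set u : tens E G | a u <= 1]].

End SeqClasses.

Arguments alphaXY {R S} X Y E G u.
Arguments bdlin {R S} E.

From Pilot Require Import Defs.
From HB Require Import structures.
From mathcomp Require Import all_boot all_order all_algebra.
From mathcomp Require Import boolp classical_sets functions reals constructive_ereal ereal.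
From mathcomp Require Import sequences.
From mathcomp Require Import complex.
From mathcomp Require Import ring lra.
Import Order.TTheory GRing.Theory Num.Theory.
Local Open Scope ring_scope.

(* (a) If T is (X;Y^dual)-summing, the partial sums of sum_j psi_j(T x_j) converge for all
   x in X(E) and psi in Y(F^* ).  The uniform boundedness principle, applied in x for fixed
   psi, in psi for fixed x, and finally in x uniformly over the unit ball of Y(F^* ), bounds
   them by C ||x|| ||psi||.  Spherical completeness of Y allows rotating each psi_j by a
   unimodular scalar, so the same bound holds for sum_(j < n) |psi_j(T x_j)|: the norm
   ||T||_{X;Y^dual} is finite.  Since phi_T(sum_j x_j (x) psi_j) = sum_j psi_j(T x_j) for every
   representation of a tensor, |phi_T(u)| <= ||T||_{X;Y^dual} alpha_{X,Y}(u).
   (b) Conversely, continuity at 0 and homogeneity of alpha give |phi_T(u)| <= C alpha(u).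
   Testing this on the tensors sum_(j < n) x_j (x) l_j psi_j with |l_j| = 1, whose alpha is at
   most ||x|| ||psi|| because truncation does not increase norms in finitely determined or
   dominated classes, bounds sum_(j < n) |psi_j(T x_j)|; the series thus converges absolutely,
   and the same test gives ||T||_{X;Y^dual} <= ||phi_T||. *)

Lemma le_max0_mul {R : realDomainType} {C a : R} : 0 <= a -> a <= 1 -> C * a <= Num.max C 0.
Proof.
move=> a_ge0 a_le1; have C_le : C <= Num.max C 0 by rewrite le_max lexx.
have max_ge0 : 0 <= Num.max C 0 by rewrite le_max lexx orbT.
by apply: le_trans (ler_wpM2r a_ge0 C_le) _; rewrite ler_piMr.
Qed.

Section ScalarConvergence.
Context {R : realType} {S : scal R}.
Local Notation K := (sK S).
Local Notation kabs := (kabs S).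

Definition kcvg (u : nat -> K) (l : K) : Prop :=
  forall e : R, 0 < e -> exists N, forall n, (N <= n)%N -> kabs (u n - l) < e.

Definition kcauchy (u : nat -> K) : Prop :=
  forall e : R, 0 < e -> exists N, forall m n, (N <= m)%N -> (N <= n)%N ->
    kabs (u m - u n) < e.

Lemma kabs_sum (I : Type) (s : seq I) (F : I -> K) :
  kabs (\sum_(i <- s) F i) <= \sum_(i <- s) kabs (F i).
Proof.
elim: s => [|a s IH]; first by rewrite !big_nil (kabs0 S).
by rewrite !big_cons; apply: le_trans (kabsD S _ _) _; apply: lerD.
Qed.

Lemma kcvg_bounded {u : nat -> K} {l} : kcvg u l -> exists B, forall n, kabs (u n) <= B.
Proof.
move=> ul; have [N hN] := ul 1 ltr01.
exists (kabs l + 1 + \sum_(k < N) kabs (u k)) => n.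
have sum_ge0 : 0 <= \sum_(k < N) kabs (u k) by apply: sumr_ge0 => k _; apply: kabs_ge0.
have := kabs_ge0 S l; have [Nn|nN] := leqP N n.
  by have := hN n Nn; have := kabsD S (u n - l) l; rewrite subrK; lra.
have : kabs (u n) <= \sum_(k < N) kabs (u k).
  by rewrite (bigD1 (Ordinal nN)) //= lerDl; apply: sumr_ge0 => k _; apply: kabs_ge0.
lra.
Qed.

Lemma kabs_subr_ge a b : kabs a - kabs b <= kabs (a - b).
Proof. by rewrite lerBlDr; apply: le_trans (kabsD S _ _); rewrite subrK. Qed.

Lemma kcvg_cst (c : K) : kcvg (fun=> c) c.
Proof. by move=> e e0; exists 0%N => n _; rewrite subrr (kabs0 S). Qed.

Lemma kcvgL {u v : nat -> K} a {l1 l2} : kcvg u l1 -> kcvg v l2 ->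
  kcvg (fun n => a * u n + v n) (a * l1 + l2).
Proof.
move=> ul vl e e0; have a1_gt0 : 0 < kabs a + 1 by apply: ltr_wpDl (kabs_ge0 S a) _.
have [N1 hN1] := ul _ (divr_gt0 (divr_gt0 e0 (ltr0n _ 2)) a1_gt0).
have [N2 hN2] := vl _ (divr_gt0 e0 (ltr0n _ 2)).
exists (maxn N1 N2) => n; rewrite geq_max => /andP[n1 n2].
have -> : a * u n + v n - (a * l1 + l2) = a * (u n - l1) + (v n - l2) by ring.
apply: le_lt_trans (kabsD S _ _) _; rewrite (kabsM S).
have := hN2 n n2; suff : kabs a * kabs (u n - l1) <= e / 2 by lra.
apply: le_trans (_ : (kabs a + 1) * (e / 2 / (kabs a + 1)) <= _); last first.
  by rewrite mulrC divfK ?gt_eqF.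
by apply: ler_pM; rewrite ?(kabs_ge0 S) ?lerDl // ltW // hN1.
Qed.

Lemma kcvgB {u v : nat -> K} {l1 l2} : kcvg u l1 -> kcvg v l2 ->
  kcvg (fun n => u n - v n) (l1 - l2).
Proof.
move=> ul vl; have := kcvgL (-1) vl ul; rewrite mulN1r addrC.
by under [fun n => _]funext => n do rewrite mulN1r addrC.
Qed.

End ScalarConvergence.

Definition kcomplete {R : realType} (S : scal R) : Prop :=
  forall u : nat -> sK S, kcauchy u -> exists l, kcvg u l.

(* The two features of R and C used below: R embeds isometrically into K, and
   every scalar is turned into its absolute value by a unimodular factor. *)
Definition real_embedding {R : realType} {S : scal R} (emb : {rmorphism R -> sK S}) : Prop :=
  (forall r, kabs S (emb r) = `|r|) /\
  (forall z, exists l, kabs S l = 1 /\ l * z = emb (kabs S z)).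

Section RealEmbedding.
Context {R : realType} {S : scal R}.
Local Notation K := (sK S).
Local Notation kabs := (kabs S).
Context {emb : {rmorphism R -> K}}.
Hypothesis hemb : real_embedding emb.

Lemma kabs_emb r : kabs (emb r) = `|r|.
Proof. by case: hemb. Qed.

Lemma kabs_emb_ge0 r : 0 <= r -> kabs (emb r) = r.
Proof. by move=> r0; rewrite kabs_emb ger0_norm. Qed.

Lemma kabs_rotate z : exists l, kabs l = 1 /\ l * z = emb (kabs z).
Proof. by case: hemb. Qed.

Lemma kabs1 : kabs 1 = 1.
Proof. by rewrite -(rmorph1 emb) kabs_emb normr1. Qed.

Lemma kabsN1 : kabs (-1) = 1.
Proof. by rewrite -(rmorph1 emb) -rmorphN kabs_emb normrN normr1. Qed.

Lemma kabsN z : kabs (- z) = kabs z.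
Proof. by rewrite -mulN1r (kabsM S) kabsN1 mul1r. Qed.

Lemma kabs_subC a b : kabs (a - b) = kabs (b - a).
Proof. by rewrite -kabsN opprB. Qed.

Lemma kabs_eq0 z : kabs z = 0 -> z = 0.
Proof.
move=> z0; have [l [l1 lz]] := kabs_rotate z.
have l_neq0 : l != 0 by apply: contra_eq_neq l1 => ->; rewrite (kabs0 S) eq_sym oner_neq0.
by move: lz; rewrite z0 rmorph0 => /eqP; rewrite mulf_eq0 (negbTE l_neq0) => /eqP.
Qed.

Lemma kabs_gt0 z : (0 < kabs z) = (z != 0).
Proof.
rewrite lt_def (kabs_ge0 S) andbT; apply/idP/idP; apply: contra_neq.
  by move->; exact: kabs0.
exact: kabs_eq0.
Qed.

Lemma kabs_le_max_addsub a b : kabs b <= Num.max (kabs (a + b)) (kabs (a - b)).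
Proof.
have twice : emb 2 * b = (a + b) - (a - b) by rewrite rmorph_nat; ring.
have := kabsD S (a + b) (- (a - b)); rewrite -twice (kabsM S) kabs_emb_ge0 // kabsN.
rewrite le_max => h; apply/orP.
by case: (leP (kabs (a + b)) (kabs (a - b))) => ?; [right|left]; lra.
Qed.

Lemma kcvg_unique {u : nat -> K} {l1 l2} : kcvg u l1 -> kcvg u l2 -> l1 = l2.
Proof.
move=> h1 h2; apply/eqP; rewrite -subr_eq0; apply/eqP/kabs_eq0/eqP.
rewrite eq_le (kabs_ge0 S) andbT; apply/ler_addgt0Pr => e e0; rewrite add0r.
have [N1 hN1] := h1 _ (divr_gt0 e0 (ltr0n _ 2)); have [N2 hN2] := h2 _ (divr_gt0 e0 (ltr0n _ 2)).
have := hN1 _ (leq_maxl N1 N2); have := hN2 _ (leq_maxr N1 N2).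
set z := u _ => a b; have -> : l1 - l2 = (z - l2) - (z - l1) by ring.
by apply: le_trans (kabsD S _ _) _; rewrite kabsN; lra.
Qed.

Lemma kcvg_le {u : nat -> K} {l B} : kcvg u l ->
  (exists N, forall n, (N <= n)%N -> kabs (u n) <= B) -> kabs l <= B.
Proof.
move=> ul [N hN]; apply/ler_addgt0Pr => e e0; have [M hM] := ul e e0.
have := hM _ (leq_maxl M N); have := hN _ (leq_maxr M N).
by have := kabsD S (l - u (maxn M N)) (u (maxn M N)); rewrite subrK kabs_subC; lra.
Qed.

End RealEmbedding.

Section NormFacts.
Context {R : realType} {S : scal R} {emb : {rmorphism R -> sK S}}.
Hypothesis hemb : real_embedding emb.
Context {E : nspace S}.
Hypothesis nE : is_norm E.

Lemma nrm0 : nrm E 0 = 0.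
Proof. by case: nE => h _ _; apply/h. Qed.

Lemma nrmZ a (x : E) : nrm E (a *: x) = kabs S a * nrm E x.
Proof. by case: nE. Qed.

Lemma nrmD (x y : E) : nrm E (x + y) <= nrm E x + nrm E y.
Proof. by case: nE. Qed.

Lemma nrmN (x : E) : nrm E (- x) = nrm E x.
Proof. by rewrite -scaleN1r nrmZ (kabsN1 hemb) mul1r. Qed.

Lemma nrm_ge0 (x : E) : 0 <= nrm E x.
Proof.
have : 0 <= nrm E x + nrm E x by rewrite -{1}nrm0 -(subrr x) -[X in _ <= _ + X]nrmN nrmD.
by rewrite -mulr2n -mulr_natr pmulr_lge0.
Qed.

End NormFacts.

Section HomogeneousBound.
Context {R : realType} {S : scal R}.
Local Notation K := (sK S).
Local Notation kabs := (kabs S).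
Context {emb : {rmorphism R -> K}}.
Hypothesis hemb : real_embedding emb.

Lemma le_homogeneous_norm (V : lmodType K) (M : V -> Prop) (N h : V -> R) (c : R) :
  (forall a x, M x -> M (a *: x)) ->
  (forall a x, M x -> N (a *: x) = kabs a * N x) ->
  (forall a x, M x -> h (a *: x) = kabs a * h x) ->
  (forall x, M x -> 0 <= N x) ->
  (forall x, M x -> N x <= 1 -> h x <= c) ->
  forall x, M x -> h x <= c * N x.
Proof.
move=> MZ NZ hZ N_ge0 hc x Mx.
have [Nx0|Nx_neq0] := eqVneq (N x) 0.
  rewrite Nx0 mulr0 leNgt; apply/negP => hx_gt0.
  pose s := (`|c| + 1) / h x; have s_ge0 : 0 <= s by rewrite divr_ge0 ?ltW ?ltr_wpDl.
  have := hc _ (MZ (emb s) _ Mx); rewrite NZ // Nx0 mulr0 ler01 hZ //.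
  rewrite kabs_emb_ge0 // divfK ?gt_eqF // => /(_ isT).
  by have := ler_norm c; lra.
have Nx_gt0 : 0 < N x by rewrite lt_def Nx_neq0 N_ge0.
have kinv : kabs (emb (N x)^-1) = (N x)^-1 by rewrite kabs_emb_ge0 // invr_ge0 ltW.
have := hc _ (MZ (emb (N x)^-1) _ Mx); rewrite NZ // hZ // kinv mulVf ?gt_eqF // lexx.
by rewrite mulrC ler_pdivrMr // => /(_ isT).
Qed.

End HomogeneousBound.

Section UniformBoundedness.
Context {R : realType} {S : scal R}.
Local Notation K := (sK S).
Local Notation kabs := (kabs S).
Context {emb : {rmorphism R -> K}}.
Hypothesis hemb : real_embedding emb.

Variables (V : lmodType K) (M : V -> Prop) (N : V -> R).
Hypothesis mem0 : M 0.
Hypothesis memL : forall a x y, M x -> M y -> M (a *: x + y).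
Hypothesis NZ : forall a x, M x -> N (a *: x) = kabs a * N x.
Hypothesis ND : forall {x y}, M x -> M y -> N (x + y) <= N x + N y.
Hypothesis N_complete : forall {u : nat -> V}, (forall n, M (u n)) ->
  (forall e, 0 < e -> exists n0, forall m n, (n0 <= m)%N -> (n0 <= n)%N -> N (u m - u n) < e) ->
  exists2 l, M l & forall e, 0 < e -> exists n0, forall n, (n0 <= n)%N -> N (u n - l) < e.

Lemma ubp_memZ a {x} : M x -> M (a *: x).
Proof. by move=> Mx; rewrite -[_ *: _]addr0; apply: memL. Qed.

Lemma ubp_memD {x y} : M x -> M y -> M (x + y).
Proof. by move=> Mx My; rewrite -[x]scale1r; apply: memL. Qed.

Lemma ubp_memB {x y} : M x -> M y -> M (x - y).
Proof. by move=> Mx My; rewrite -scaleN1r; apply: ubp_memD => //; apply: ubp_memZ. Qed.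

Lemma ubp_N0 : N 0 = 0.
Proof. by rewrite -(scale0r 0) NZ // (kabs0 S) mul0r. Qed.

Lemma ubp_N_subC {x y} : M x -> M y -> N (x - y) = N (y - x).
Proof.
move=> Mx My; have -> : x - y = (-1) *: (y - x) by rewrite scaleN1r opprB.
by rewrite NZ ?(kabsN1 hemb) ?mul1r //; apply: ubp_memB.
Qed.

Lemma ubp_N_ge0 {x} : M x -> 0 <= N x.
Proof.
move=> Mx; have := ND Mx (ubp_memB mem0 Mx).
rewrite (ubp_N_subC mem0 Mx) subr0 addrA addr0 subrr ubp_N0.
by rewrite -mulr2n -mulr_natr pmulr_lge0.
Qed.

Lemma ubp_N_triangle {x} y {z} : M x -> M y -> M z -> N (x - z) <= N (x - y) + N (y - z).
Proof.
move=> Mx My Mz; have -> : x - z = (x - y) + (y - z) by rewrite addrA subrK.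
exact: ND (ubp_memB Mx My) (ubp_memB My Mz).
Qed.

Variables (I : Type) (P : I -> Prop) (f : I -> V -> K).
Hypothesis f_lin : forall {i}, P i -> forall a {x y}, M x -> M y ->
  f i (a *: x + y) = a * f i x + f i y.
Hypothesis f_bounded : forall {i}, P i -> exists C, forall x, M x -> kabs (f i x) <= C * N x.
Hypothesis f_pointwise : forall {x}, M x -> exists B, forall i, P i -> kabs (f i x) <= B.

Lemma ubp_f0 {i} : P i -> f i 0 = 0.
Proof.
move=> Pi; have := f_lin Pi 1 mem0 mem0; rewrite addr0 scale1r mul1r => h.
by apply: (@addrI _ (f i 0)); rewrite addr0 -h.
Qed.

Lemma ubp_fZ {i} a {x} : P i -> M x -> f i (a *: x) = a * f i x.
Proof. by move=> Pi Mx; rewrite -[_ *: _]addr0 f_lin // ubp_f0 // addr0. Qed.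

Lemma ubp_fD {i x y} : P i -> M x -> M y -> f i (x + y) = f i x + f i y.
Proof. by move=> Pi Mx My; rewrite -{1}[x]scale1r f_lin // mul1r. Qed.

Lemma ubp_fB {i x y} : P i -> M x -> M y -> f i (x - y) = f i x - f i y.
Proof.
move=> Pi Mx My; have -> : x - y = x + (-1) *: y by rewrite scaleN1r.
by rewrite ubp_fD ?ubp_fZ ?mulN1r //; apply: ubp_memZ.
Qed.

Definition fnorm i := sup [set kabs (f i x) | x in [set x | M x /\ N x <= 1]].

Lemma has_sup_fnorm {i} : P i -> has_sup [set kabs (f i x) | x in [set x | M x /\ N x <= 1]].
Proof.
move=> Pi; split; first by exists (kabs (f i 0)), 0 => //; split => //; rewrite ubp_N0.
have [C hC] := f_bounded Pi; exists (Num.max C 0) => _ [x [Mx Nx1] <-].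
exact: le_trans (hC x Mx) (le_max0_mul (ubp_N_ge0 Mx) Nx1).
Qed.

Lemma le_fnorm {i x} : P i -> M x -> N x <= 1 -> kabs (f i x) <= fnorm i.
Proof. by move=> Pi Mx Nx1; have := sup_upper_bound (has_sup_fnorm Pi); apply; exists x. Qed.

Lemma fnorm_ge0 {i} : P i -> 0 <= fnorm i.
Proof. by move=> Pi; apply: le_trans (le_fnorm Pi mem0 _); rewrite ?(kabs_ge0 S) ?ubp_N0. Qed.

Lemma le_fnorm_mul {i x} : P i -> M x -> kabs (f i x) <= fnorm i * N x.
Proof.
move=> Pi Mx; apply: (le_homogeneous_norm hemb _ M N (fun y => kabs (f i y))) => //.
- by move=> a y My; apply: ubp_memZ.
- by move=> a y My; rewrite ubp_fZ // (kabsM S).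
- by move=> y My; apply: ubp_N_ge0.
- by move=> y My Ny1; apply: le_fnorm.
Qed.

Lemma fnorm_almost_attained {i} : P i -> 0 < fnorm i ->
  exists y, [/\ M y, N y <= 1 & fnorm i * (2 / 3) < kabs (f i y)].
Proof.
move=> Pi fi_gt0.
have [_ [y [My Ny1] <-] hy] := sup_adherent (divr_gt0 fi_gt0 (ltr0n _ 3)) (has_sup_fnorm Pi).
by exists y; split => //; apply: le_lt_trans hy; rewrite -/(fnorm i); lra.
Qed.

(* Gliding hump: with y_n in the unit ball and |f_n(y_n)| > 2/3 ||f_n||, put
   x_n = x_(n-1) +- 3^-n y_n, the sign chosen so that |f_n(x_n)| >= 3^-n |f_n(y_n)|.
   Then ||lim x - x_n|| <= 3^-n / 2, hence |f_n(lim x)| >= 3^-n ||f_n|| (2/3 - 1/2) >= n + 1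
   as ||f_n|| >= 6 (n + 1) 3^n, contradicting pointwise boundedness at lim x. *)
Section GlidingHump.
Variable g : nat -> I * V.
Hypothesis hg : forall n, [/\ P (g n).1, M (g n).2, N (g n).2 <= 1,
  (n.+1 * 6 * 3 ^ n)%:R <= fnorm (g n).1 & fnorm (g n).1 * (2 / 3) < kabs (f (g n).1 (g n).2)].

Definition hump_radius n : R := ((3 ^ n)%:R)^-1.

Definition signed_step i (x y : V) : V :=
  if kabs (f i (x - y)) <= kabs (f i (x + y)) then x + y else x - y.

Fixpoint hump_seq n : V :=
  if n is m.+1 then signed_step (g n).1 (hump_seq m) (emb (hump_radius n) *: (g n).2) else 0.

Lemma hump_radius_gt0 n : 0 < hump_radius n.
Proof. by rewrite invr_gt0 ltr0n expn_gt0. Qed.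

Lemma hump_radiusS n : hump_radius n.+1 = hump_radius n / 3.
Proof. by rewrite /hump_radius expnSr natrM invfM. Qed.

Lemma hump_radius_small {e} : 0 < e -> exists n, hump_radius n < e.
Proof.
move=> e0; have einv_ge0 : 0 <= e^-1 by rewrite invr_ge0 ltW.
have := archi_boundP einv_ge0; set n := Num.Def.archi_bound _ => hn.
exists n; rewrite /hump_radius -(invrK e) ltf_pV2 ?posrE ?invr_gt0 ?ltr0n ?expn_gt0 //.
by apply: lt_trans hn _; rewrite ltr_nat ltn_expl.
Qed.

Lemma hump_radius_anti {n m} : (n <= m)%N -> hump_radius m <= hump_radius n.
Proof. by move=> nm; rewrite lef_pV2 ?posrE ?ltr0n ?expn_gt0 // ler_nat leq_pexp2l. Qed.

Lemma mem_hump_seq n : M (hump_seq n).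
Proof.
elim: n => [|n IH] //=; have [_ My _ _ _] := hg n.+1; rewrite /signed_step.
by case: ifP => _; [apply: ubp_memD|apply: ubp_memB] => //; apply: ubp_memZ.
Qed.

Lemma N_hump_step n : N (hump_seq n.+1 - hump_seq n) <= hump_radius n.+1.
Proof.
have [_ My Ny1 _ _] := hg n.+1; have r_ge0 := ltW (hump_radius_gt0 n.+1).
have Ny : N (emb (hump_radius n.+1) *: (g n.+1).2) <= hump_radius n.+1.
  by rewrite NZ // kabs_emb_ge0 // ler_piMr.
rewrite /= /signed_step; case: ifP => _; rewrite addrC addKr //.
by rewrite -scaleN1r NZ ?(kabsN1 hemb) ?mul1r //; apply: ubp_memZ.
Qed.

Lemma N_hump_cauchy {n m} : (n <= m)%N ->
  N (hump_seq m - hump_seq n) <= (hump_radius n - hump_radius m) / 2.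
Proof.
elim: m => [|m IH]; first by rewrite leqn0 => /eqP ->; rewrite !subrr ubp_N0 mul0r.
rewrite leq_eqVlt => /orP[/eqP ->|/IH hm]; first by rewrite !subrr ubp_N0 mul0r.
apply: le_trans (ubp_N_triangle (hump_seq m) (mem_hump_seq _) (mem_hump_seq m) (mem_hump_seq _)) _.
by have := N_hump_step m; rewrite hump_radiusS; lra.
Qed.

Lemma hump_limit : exists2 l, M l & forall n, N (l - hump_seq n) <= hump_radius n / 2.
Proof.
have [|l Ml hl] := N_complete mem_hump_seq.
  move=> e e0; have [n0 hn0] := hump_radius_small e0; exists n0.
  have small k l : (n0 <= k)%N -> (k <= l)%N -> N (hump_seq l - hump_seq k) < e.
    move=> hk kl; apply: le_lt_trans (N_hump_cauchy kl) _; apply: le_lt_trans hn0.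
    have := hump_radius_anti hk; have := hump_radius_gt0 l; have := hump_radius_gt0 n0.
    lra.
  move=> m n hm hn; have [nm|/ltnW mn] := leqP n m; first exact: small.
  by rewrite (ubp_N_subC (mem_hump_seq m) (mem_hump_seq n)); apply: small.
exists l => // n; apply/ler_addgt0Pr => e e0; have [N1 hN1] := hl e e0.
have mn := leq_maxl n N1; have := N_hump_cauchy mn; have := hump_radius_gt0 (maxn n N1).
have := hN1 _ (leq_maxr n N1); rewrite (ubp_N_subC (mem_hump_seq _) Ml) => h1 h2 h3.
apply: le_trans (ubp_N_triangle _ Ml (mem_hump_seq (maxn n N1)) (mem_hump_seq _)) _; lra.
Qed.

Lemma hump_seq_lower n :
  hump_radius n.+1 * kabs (f (g n.+1).1 (g n.+1).2) <= kabs (f (g n.+1).1 (hump_seq n.+1)).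
Proof.
have [Pi My _ _ _] := hg n.+1; rewrite [hump_seq n.+1]/= /signed_step.
set i := (g n.+1).1; set x := hump_seq n; set z := emb (hump_radius n.+1) *: (g n.+1).2.
have Mx : M x := mem_hump_seq n; have Mz : M z by apply: ubp_memZ.
have -> : hump_radius n.+1 * kabs (f i (g n.+1).2) = kabs (f i z).
  by rewrite ubp_fZ // (kabsM S) kabs_emb_ge0 // ltW // hump_radius_gt0.
have := kabs_le_max_addsub hemb (f i x) (f i z); rewrite -ubp_fD // -ubp_fB //.
by case: ifP => h; [rewrite max_l|rewrite max_r // ltW // ltNge h].
Qed.

Lemma gliding_hump_absurd : False.
Proof.
have [l Ml hl] := hump_limit; have [B hB] := f_pointwise Ml.
have lower n : n.+2%:R <= B.
  have [Pi _ _ hfn hy] := hg n.+1; have low := hump_seq_lower n.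
  set i := (g n.+1).1 in Pi hfn hy low *; set x := hump_seq n.+1 in low *.
  have Mx : M x := mem_hump_seq _; have r_gt0 := hump_radius_gt0 n.+1.
  have tail : kabs (f i (x - l)) <= fnorm i * (hump_radius n.+1 / 2).
    apply: le_trans (le_fnorm_mul Pi (ubp_memB Mx Ml)) _.
    by rewrite ler_wpM2l ?fnorm_ge0 // (ubp_N_subC Mx Ml) hl.
  have fl : f i l = f i x - f i (x - l).
    by rewrite -(ubp_fB Pi Mx (ubp_memB Mx Ml)) opprB addrCA subrr addr0.
  have := kabs_subr_ge (f i x) (f i (x - l)); rewrite -fl => /le_trans /(_ (hB i Pi)) tri.
  have h1 : hump_radius n.+1 * (fnorm i * (2 / 3)) <= hump_radius n.+1 * kabs (f i (g n.+1).2).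
    by apply: ler_wpM2l; apply: ltW.
  have h2 : hump_radius n.+1 * (n.+2 * 6 * 3 ^ n.+1)%:R <= hump_radius n.+1 * fnorm i.
    by apply: ler_wpM2l => //; apply: ltW.
  have r_scale : hump_radius n.+1 * (n.+2 * 6 * 3 ^ n.+1)%:R = n.+2%:R * 6.
    by rewrite /hump_radius natrM mulrC -mulrA mulfV ?mulr1 ?natrM ?pnatr_eq0 ?expn_eq0.
  rewrite r_scale in h2; lra.
have := archi_boundP (normr_ge0 B); set k := Num.Def.archi_bound _ => hk.
by have := lower k; have := ler_norm B; rewrite -!natr1 in hk *; lra.
Qed.

End GlidingHump.

Theorem uniform_boundedness : exists C, forall i, P i -> forall x, M x -> kabs (f i x) <= C * N x.
Proof.
apply: contrapT => unbounded.
have big n : exists p : I * V, [/\ P p.1, M p.2, N p.2 <= 1,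
    (n.+1 * 6 * 3 ^ n)%:R <= fnorm p.1 & fnorm p.1 * (2 / 3) < kabs (f p.1 p.2)].
  have [i [Pi hi]] : exists i, P i /\ (n.+1 * 6 * 3 ^ n)%:R <= fnorm i.
    apply: contrapT => small; apply: unbounded; exists (n.+1 * 6 * 3 ^ n)%:R => i Pi x Mx.
    apply: le_trans (le_fnorm_mul Pi Mx) _; rewrite ler_wpM2r ?ubp_N_ge0 //.
    by rewrite leNgt; apply/negP => /ltW hi; apply: small; exists i.
  have [|y [My Ny1 hy]] := fnorm_almost_attained Pi.
    by apply: lt_le_trans hi; rewrite ltr0n !muln_gt0 expn_gt0.
  by exists (i, y).
have [g hg] := choice big; exact: (gliding_hump_absurd g hg).
Qed.

End UniformBoundedness.

Section DualSpace.
Context {R : realType} {S : scal R}.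
Local Notation K := (sK S).
Local Notation kabs := (kabs S).
Context {emb : {rmorphism R -> K}}.
Hypothesis hemb : real_embedding emb.
Context {F : nspace S}.
Hypothesis nF : is_norm F.

Lemma fapp_bdlin (f : dual F) :
  linear (fapp f : F -> K^o) /\ exists C : R, forall x, kabs (fapp f x) <= C * nrm F x.
Proof. by have /asboolP := valP f. Qed.

Lemma fappL (f : dual F) a x y : fapp f (a *: x + y) = a * fapp f x + fapp f y.
Proof. by have [lin _] := fapp_bdlin f; rewrite lin. Qed.

Lemma fapp0 (f : dual F) : fapp f 0 = 0.
Proof.
have := fappL f 1 0 0; rewrite scale1r addr0 mul1r => h.
by apply: (@addrI _ (fapp f 0)); rewrite addr0 -h.
Qed.

Lemma fappZ (f : dual F) a x : fapp f (a *: x) = a * fapp f x.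
Proof. by rewrite -[a *: x]addr0 fappL fapp0 addr0. Qed.

Lemma fappBl (f g : dual F) x : fapp (f - g) x = fapp f x - fapp g x.
Proof. by []. Qed.

Lemma fappZl a (f : dual F) x : fapp (a *: f) x = a * fapp f x.
Proof. by []. Qed.

Lemma has_sup_dual_norm (f : dual F) :
  has_sup [set kabs (fapp f x) | x in [set x : F | nrm F x <= 1]].
Proof.
split; first by exists (kabs (fapp f 0)), 0 => //=; rewrite (nrm0 nF).
have [_ [C hC]] := fapp_bdlin f; exists (Num.max C 0) => _ [x x1 <-].
exact: le_trans (hC x) (le_max0_mul (nrm_ge0 hemb nF x) x1).
Qed.

Lemma le_dual_norm (f : dual F) x : nrm F x <= 1 -> kabs (fapp f x) <= nrm (dual F) f.
Proof. by move=> x1; have := sup_upper_bound (has_sup_dual_norm f); apply; exists x. Qed.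

Lemma dual_norm_ge0 (f : dual F) : 0 <= nrm (dual F) f.
Proof. by apply: le_trans (le_dual_norm f 0 _); rewrite ?(kabs_ge0 S) ?(nrm0 nF). Qed.

Lemma dual_norm_le (f : dual F) c :
  (forall x, nrm F x <= 1 -> kabs (fapp f x) <= c) -> nrm (dual F) f <= c.
Proof.
move=> hc; apply: ge_sup; first by exists (kabs (fapp f 0)), 0 => //=; rewrite (nrm0 nF).
by move=> _ [x x1 <-]; apply: hc.
Qed.

Lemma le_dual_norm_mul (f : dual F) x : kabs (fapp f x) <= nrm (dual F) f * nrm F x.
Proof.
apply: (le_homogeneous_norm hemb _ (fun=> True) (nrm F) (fun y => kabs (fapp f y))) => //.
- by move=> a y _; rewrite (nrmZ nF).
- by move=> a y _; rewrite fappZ (kabsM S).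
- by move=> y _; apply: (nrm_ge0 hemb nF).
- by move=> y _; apply: le_dual_norm.
Qed.

Lemma dual_normZ_le a (f : dual F) : nrm (dual F) (a *: f) <= kabs a * nrm (dual F) f.
Proof.
apply: dual_norm_le => x x1; rewrite fappZl (kabsM S).
by rewrite ler_wpM2l ?(kabs_ge0 S) ?le_dual_norm.
Qed.

Lemma dual_is_norm : is_norm (dual F).
Proof.
split.
- move=> f; split => [f0|->]; last first.
    apply/eqP; rewrite eq_le dual_norm_ge0 andbT; apply: dual_norm_le => x _.
    by rewrite /fapp /= (kabs0 S).
  apply: val_inj; apply: funext => x /=; apply: (kabs_eq0 hemb); apply/eqP.
  by rewrite eq_le (kabs_ge0 S) andbT; have := le_dual_norm_mul f x; rewrite f0 mul0r.
- move=> a f; apply/eqP; rewrite eq_le dual_normZ_le /=.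
  have [->|a_neq0] := eqVneq a 0; first by rewrite (kabs0 S) mul0r dual_norm_ge0.
  have := dual_normZ_le a^-1 (a *: f); rewrite scalerA mulVf // scale1r.
  have a_gt0 : 0 < kabs a by rewrite (kabs_gt0 hemb).
  by rewrite -(ler_pM2l a_gt0) mulrA -(kabsM S) mulfV // (kabs1 hemb) mul1r.
- move=> f g; apply: dual_norm_le => x x1.
  by apply: le_trans (kabsD S _ _) _; apply: lerD; apply: le_dual_norm.
Qed.

Section Completeness.
Hypothesis hK : kcomplete S.
Variable u : nat -> dual F.
Hypothesis u_cauchy : forall e, 0 < e -> exists N, forall m n, (N <= m)%N -> (N <= n)%N ->
  nrm (dual F) (u m - u n) < e.

Lemma dual_pointwise_cauchy x : kcauchy (fun n => fapp (u n) x).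
Proof.
move=> e e0; have x1_gt0 : 0 < nrm F x + 1 by apply: ltr_wpDl (nrm_ge0 hemb nF x) _.
have [N hN] := u_cauchy _ (divr_gt0 e0 x1_gt0); exists N => m n hm hn.
rewrite -fappBl; apply: le_lt_trans (le_dual_norm_mul _ _) _.
apply: le_lt_trans (_ : e / (nrm F x + 1) * nrm F x < e).
  by rewrite ler_wpM2r ?(nrm_ge0 hemb nF) // ltW // hN.
by rewrite mulrAC ltr_pdivrMr // ltr_pM2l // ltrDl.
Qed.

Lemma dual_limit : exists l : dual F, forall e, 0 < e ->
  exists N, forall n, (N <= n)%N -> nrm (dual F) (u n - l) < e.
Proof.
have [L hL] := choice (fun x => hK _ (dual_pointwise_cauchy x)).
have L_lin : linear (L : F -> K^o).
  move=> a x y; apply: (kcvg_unique hemb (hL (a *: x + y))).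
  under [fun n => _]funext => n do rewrite fappL.
  exact: kcvgL (hL x) (hL y).
have [N1 hN1] := u_cauchy _ ltr01.
have L_bounded : exists C, forall x, kabs (L x) <= C * nrm F x.
  exists (nrm (dual F) (u N1) + 1) => x; apply: (kcvg_le hemb (hL x)); exists N1 => n hn.
  rewrite -[u n](subrK (u N1)); apply: le_trans (le_dual_norm_mul _ _) _.
  rewrite ler_wpM2r ?(nrm_ge0 hemb nF) //; apply: le_trans (nrmD dual_is_norm _ _) _.
  by rewrite addrC lerD2l ltW // hN1.
have L_in : (L : F -> K^o) \in bdlin F by apply/asboolP.
pose l : dual F := exist (fun f : F -> K^o => f \in bdlin F) L L_in.
exists l => e e0; have [N hN] := u_cauchy _ (divr_gt0 e0 (ltr0n _ 2)); exists N => n hn.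
apply: le_lt_trans (_ : e / 2 < e); last by lra.
apply: dual_norm_le => x x1; rewrite fappBl.
apply: (kcvg_le hemb (kcvgB (kcvg_cst (fapp (u n) x)) (hL x))); exists N => m hm.
rewrite -fappBl.
apply: le_trans (le_dual_norm_mul _ _) _.
apply: le_trans (_ : e / 2 * 1 <= _); last by rewrite mulr1.
by apply: ler_pM; rewrite ?dual_norm_ge0 ?(nrm_ge0 hemb nF) // ltW // hN.
Qed.

End Completeness.

Lemma banach_dual : kcomplete S -> banach (dual F).
Proof. by move=> hK; split; [exact: dual_is_norm|move=> u; exact: dual_limit]. Qed.

End DualSpace.

Lemma real_cauchy_cvg {R : realType} (u : nat -> R) : @kcauchy R (realS R) u ->
  exists l, @kcvg R (realS R) u l.
Proof.
move=> cu; rewrite /kcvg /=; have [N1 hN1] := cu 1 ltr01.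
pose A := [set x : R | exists N, forall n, (N <= n)%N -> x <= u n]%classic.
have hA : has_sup A.
  split; first exists (u N1 - 1), N1 => n hn.
    by have := hN1 n N1 hn (leqnn _); rewrite ltr_norml; lra.
  exists (u N1 + 1) => x [N hN]; have := hN (maxn N N1) (leq_maxl _ _).
  by have := hN1 (maxn N N1) N1 (leq_maxr _ _) (leqnn _); rewrite ltr_norml; lra.
exists (sup A) => e e0; have [N hN] := cu _ (divr_gt0 e0 (ltr0n _ 2)); exists N => n hn.
have lower : u N - e / 2 <= sup A.
  apply: (sup_upper_bound hA); exists N => m hm.
  by have := hN m N hm (leqnn _); rewrite ltr_norml; lra.
have upper : sup A <= u N + e / 2.
  apply: ge_sup; first by case: hA.
  move=> x [M hM]; have := hM (maxn M N) (leq_maxl _ _).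
  by have := hN (maxn M N) N (leq_maxr _ _) (leqnn _); rewrite ltr_norml; lra.
by have := hN n N hn (leqnn _); rewrite !ltr_norml; lra.
Qed.

Lemma realS_standard {R : realType} :
  exists2 emb : {rmorphism R -> sK (realS R)}, real_embedding emb & kcomplete (realS R).
Proof.
exists (idfun : {rmorphism R -> R}); last exact: real_cauchy_cvg.
split => // z /=; have [z_ge0|z_lt0] := leP 0 z.
  by exists 1; split; rewrite ?normr1 // mul1r ger0_norm.
by exists (-1); split; rewrite ?normrN ?normr1 // mulN1r ltr0_norm.
Qed.

Lemma normc_sqrt {R : realType} (a b : R) : Normc.normc (a +i* b)%C = Num.sqrt (a ^+ 2 + b ^+ 2).
Proof. by []. Qed.

Lemma complex_rotate {R : realType} (z : R[i]) :
  exists l, Normc.normc l = 1 /\ l * z = (Normc.normc z)%:C%C.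
Proof.
case: z => a b; rewrite normc_sqrt; set n := Num.sqrt _.
have s_ge0 : 0 <= a ^+ 2 + b ^+ 2 by rewrite addr_ge0 ?sqr_ge0.
have [n0|n_neq0] := eqVneq n 0.
  exists 1; split; first exact: Normc.normc1.
  rewrite mul1r n0; move/eqP: n0; rewrite /n sqrtr_eq0 => s_le0.
  have : a ^+ 2 + b ^+ 2 == 0 by rewrite eq_le s_le0 s_ge0.
  by rewrite paddr_eq0 ?sqr_ge0 // !sqrf_eq0 => /andP[/eqP-> /eqP->].
have nn : n ^+ 2 = a ^+ 2 + b ^+ 2 by rewrite sqr_sqrtr.
exists ((a / n) +i* (- b / n))%C; split.
  rewrite normc_sqrt -[RHS]sqrtr1; congr Num.sqrt.
  by rewrite !expr_div_n sqrrN -mulrDl -nn divff // sqrf_eq0.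
apply/eqP; rewrite eq_complex /=; apply/andP; split; apply/eqP; last by field.
have -> : a / n * a - - b / n * b = (a ^+ 2 + b ^+ 2) / n by field.
by rewrite -nn expr2 mulfK.
Qed.

Lemma complex_cauchy_cvg {R : realType} (u : nat -> R[i]) : @kcauchy R (complexS R) u ->
  exists l, @kcvg R (complexS R) u l.
Proof.
move=> cu; rewrite /kcvg /=.
have Re_le (w : R[i]) : `|complex.Re w| <= Normc.normc w.
  by case: w => a b; rewrite normc_sqrt /= -sqrtr_sqr ler_wsqrtr // lerDl sqr_ge0.
have Im_le (w : R[i]) : `|complex.Im w| <= Normc.normc w.
  by case: w => a b; rewrite normc_sqrt /= -sqrtr_sqr ler_wsqrtr // lerDr sqr_ge0.
have normc_le (a b : R) : Normc.normc (a +i* b)%C <= `|a| + `|b|.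
  rewrite normc_sqrt -(ger0_norm (addr_ge0 (normr_ge0 a) (normr_ge0 b))) -sqrtr_sqr.
  rewrite ler_wsqrtr // sqrrD !real_normK ?num_real // -addrA lerD2l lerDr.
  by rewrite mulrn_wge0 // mulr_ge0.
have [lr hr] : exists l, @kcvg R (realS R) (fun n => complex.Re (u n)) l.
  apply: real_cauchy_cvg => e e0; have [N hN] := cu e e0; exists N => m n hm hn.
  by apply: le_lt_trans (hN m n hm hn); rewrite /= -raddfB Re_le.
have [li hi] : exists l, @kcvg R (realS R) (fun n => complex.Im (u n)) l.
  apply: real_cauchy_cvg => e e0; have [N hN] := cu e e0; exists N => m n hm hn.
  by apply: le_lt_trans (hN m n hm hn); rewrite /= -raddfB Im_le.
exists (lr +i* li)%C => e e0; have [N1 h1] := hr _ (divr_gt0 e0 (ltr0n _ 2)).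
have [N2 h2] := hi _ (divr_gt0 e0 (ltr0n _ 2)); exists (maxn N1 N2) => n.
rewrite geq_max => /andP[n1 n2]; have := h1 n n1; have := h2 n n2.
by case: (u n) => a b /= ha hb; apply: le_lt_trans (normc_le _ _) _; lra.
Qed.

Lemma complexS_standard {R : realType} :
  exists2 emb : {rmorphism R -> sK (complexS R)}, real_embedding emb & kcomplete (complexS R).
Proof.
exists (real_complex R : {rmorphism R -> R[i]}); last exact: complex_cauchy_cvg.
split => [r|]; last exact: complex_rotate.
by rewrite /= expr0n /= addr0 sqrtr_sqr.
Qed.

Lemma scal_standard {R : realType} (S : scal R) : S = realS R \/ S = complexS R ->
  exists2 emb : {rmorphism R -> sK S}, real_embedding emb & kcomplete S.
Proof. by case=> ->; [exact: realS_standard|exact: complexS_standard]. Qed.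

Lemma nneseries_ub {R : realType} (f : nat -> R) (M : \bar R) : (forall j, 0 <= f j) ->
  (forall n, ((\sum_(j < n) f j)%:E <= M)%E) -> (\sum_(0 <= j <oo) (f j)%:E <= M)%E.
Proof.
move=> f_ge0 hM.
have := @ereal_nondecreasing_series R (fun j => (f j)%:E) xpredT 0%N (fun n _ _ => f_ge0 n).
move/ereal_nondecreasing_cvgn/cvg_lim => -> //; apply: ge_ereal_sup => _ [n _ <-] /=.
by rewrite sumEFin big_mkord.
Qed.

Lemma partial_le_nneseries {R : realType} (f : nat -> R) n : (forall j, 0 <= f j) ->
  ((\sum_(j < n) f j)%:E <= \sum_(0 <= j <oo) (f j)%:E)%E.
Proof.
move=> f_ge0; have := @nneseries_lim_ge R (fun j => (f j)%:E) xpredT 0%N n (fun n _ _ => f_ge0 n).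
by rewrite sumEFin big_mkord.
Qed.

Section AbsoluteConvergence.
Context {R : realType} {S : scal R} {emb : {rmorphism R -> sK S}}.
Hypothesis hemb : real_embedding emb.
Hypothesis hK : kcomplete S.

Lemma sum_ord_sub (V : zmodType) (b : nat -> V) {n m} : (n <= m)%N ->
  \sum_(j < m) b j - \sum_(j < n) b j = \sum_(n <= j < m) b j.
Proof.
by move=> nm; rewrite -!(big_mkord xpredT) (big_cat_nat (leq0n n) nm) /= addrAC subrr add0r.
Qed.

Lemma kabs_sum_nat_split (a : nat -> sK S) {n m} : (n <= m)%N ->
  kabs S (\sum_(j < m) a j - \sum_(j < n) a j) <=
  \sum_(j < m) kabs S (a j) - \sum_(j < n) kabs S (a j).
Proof.
by move=> nm; rewrite (sum_ord_sub _ a nm) (sum_ord_sub _ (fun j => kabs S (a j)) nm) kabs_sum.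
Qed.

Lemma abs_bounded_series_cvg (a : nat -> sK S) B :
  (forall n, \sum_(j < n) kabs S (a j) <= B) -> exists l, kcvg (fun n => \sum_(j < n) a j) l.
Proof.
move=> hB; pose s n := \sum_(j < n) kabs S (a j).
have s_mono n m : (n <= m)%N -> s n <= s m.
  by move=> nm; have := le_trans (kabs_ge0 S _) (kabs_sum_nat_split a nm); rewrite subr_ge0.
have hs : has_sup (range s) by split; [exists (s 0%N), 0%N|exists B => _ [n _ <-]; apply: hB].
apply: hK => e e0; have [_ [N _ <-] hN] := sup_adherent e0 hs; exists N.
have close k l : (N <= k)%N -> (k <= l)%N ->
    kabs S (\sum_(j < l) a j - \sum_(j < k) a j) < e.
  move=> Nk kl; apply: le_lt_trans (kabs_sum_nat_split a kl) _; rewrite -/(s l) -/(s k).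
  have : s l <= sup (range s) by apply: (sup_upper_bound hs); exists l.
  by have := s_mono _ _ Nk; lra.
move=> m n hm hn; have [nm|/ltnW mn] := leqP n m; first exact: close.
by rewrite (kabs_subC hemb); apply: close.
Qed.

End AbsoluteConvergence.

Definition scnorm {R : realType} {S : scal R} (Z : seqclass S) (W : nspace S) (x : nat -> W) : R :=
  fine (sc_norm Z W x).

Section SequenceClassNorm.
Context {R : realType} {S : scal R} {emb : {rmorphism R -> sK S}}.
Hypothesis hemb : real_embedding emb.
Context {Z : seqclass S} {W : nspace S}.
Hypotheses (sZ : is_seqclass Z) (bW : banach W).

Lemma sc_mem0 : sc_mem Z W 0.
Proof. by case: (sZ W bW) => -[]. Qed.

Lemma sc_memL a {x y} : sc_mem Z W x -> sc_mem Z W y -> sc_mem Z W (a *: x + y).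
Proof. by case: (sZ W bW) => -[_ h] *; apply: h. Qed.

Lemma sc_memZ a {x} : sc_mem Z W x -> sc_mem Z W (a *: x).
Proof. by move=> Zx; rewrite -[_ *: _]addr0; apply: sc_memL => //; apply: sc_mem0. Qed.

Lemma sc_memB {x y} : sc_mem Z W x -> sc_mem Z W y -> sc_mem Z W (x - y).
Proof.
move=> Zx Zy; have -> : x - y = (-1) *: y + x by rewrite scaleN1r addrC.
exact: sc_memL.
Qed.

Lemma sc_mem_finsupp x : (exists n, forall j, (n <= j)%N -> x j = 0) -> sc_mem Z W x.
Proof. by case: (sZ W bW) => _ h *; apply: h. Qed.

Lemma sc_normE {x} : sc_mem Z W x -> sc_norm Z W x = (scnorm Z W x)%:E.
Proof. by case: (sZ W bW) => _ _ [h _ _ _] _ _ Zx; rewrite /scnorm fineK // h. Qed.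

Lemma scnormZ a {x} : sc_mem Z W x -> scnorm Z W (a *: x) = kabs S a * scnorm Z W x.
Proof. by case: (sZ W bW) => _ _ [_ _ h _] _ _ Zx; rewrite /scnorm h // sc_normE. Qed.

Lemma scnormD {x y} : sc_mem Z W x -> sc_mem Z W y ->
  scnorm Z W (x + y) <= scnorm Z W x + scnorm Z W y.
Proof.
case: (sZ W bW) => _ _ [_ _ _ h] _ _ Zx Zy; have := h _ _ Zx Zy.
have Zxy : sc_mem Z W (x + y) by rewrite -[x]scale1r; apply: sc_memL.
by rewrite !sc_normE // -EFinD lee_fin.
Qed.

Lemma le_scnorm_coord {x} : sc_mem Z W x -> forall j, nrm W (x j) <= scnorm Z W x.
Proof. by case: (sZ W bW) => _ _ _ [_ h] _ Zx j; have := h _ Zx j; rewrite sc_normE // lee_fin. Qed.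

Lemma scnorm_ge0 {x} : sc_mem Z W x -> 0 <= scnorm Z W x.
Proof. by move=> Zx; apply: le_trans (le_scnorm_coord Zx 0%N); apply: (nrm_ge0 hemb bW.1). Qed.

Lemma scnorm0 : scnorm Z W 0 = 0.
Proof. by case: (sZ W bW) => _ _ [_ h _ _] _ _; rewrite /scnorm (proj2 (h _ sc_mem0)). Qed.

Lemma scnorm_complete (u : nat -> nat -> W) : (forall n, sc_mem Z W (u n)) ->
  (forall e, 0 < e -> exists n0, forall m n, (n0 <= m)%N -> (n0 <= n)%N ->
     scnorm Z W (u m - u n) < e) ->
  exists2 l, sc_mem Z W l &
    forall e, 0 < e -> exists n0, forall n, (n0 <= n)%N -> scnorm Z W (u n - l) < e.
Proof.
case: (sZ W bW) => _ _ _ [h _] _ Zu cu; have [|l [Zl cl]] := h u Zu.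
  move=> e e0; have [N hN] := cu e e0; exists N => m n hm hn.
  by rewrite sc_normE ?lte_fin ?hN //; apply: sc_memB.
exists l => // e e0; have [N hN] := cl e e0; exists N => n hn.
by have := hN n hn; rewrite sc_normE ?lte_fin //; apply: sc_memB.
Qed.

Lemma sc_mem_trunc k x : sc_mem Z W (Defs.trunc k x).
Proof. by apply: sc_mem_finsupp; exists k => j hj; rewrite /Defs.trunc ltnNge hj. Qed.

Lemma scnorm_trunc_le (hZ : fin_determined Z \/ fin_dominated Z) k {x} :
  sc_mem Z W x -> scnorm Z W (Defs.trunc k x) <= scnorm Z W x.
Proof.
move=> Zx; rewrite -lee_fin -(sc_normE Zx) -(sc_normE (sc_mem_trunc k x)).
case: hZ => [det|[Z' [_ [det' dom]]]].
  by rewrite ((det W bW x).2 Zx); apply: ereal_sup_ubound; exists k.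
have [[sub _] _] := dom W bW; have [Z'x ->] := sub x Zx; have [_ ->] := sub _ (sc_mem_trunc k x).
by rewrite ((det' W bW x).2 Z'x); apply: ereal_sup_ubound; exists k.
Qed.

Lemma sc_uniform_boundedness (I : Type) (P : I -> Prop) (f : I -> (nat -> W) -> sK S) :
  (forall i, P i -> forall a x y, sc_mem Z W x -> sc_mem Z W y ->
     f i (a *: x + y) = a * f i x + f i y) ->
  (forall i, P i -> exists C, forall x, sc_mem Z W x -> kabs S (f i x) <= C * scnorm Z W x) ->
  (forall x, sc_mem Z W x -> exists B, forall i, P i -> kabs S (f i x) <= B) ->
  exists C, forall i, P i -> forall x, sc_mem Z W x -> kabs S (f i x) <= C * scnorm Z W x.
Proof.
apply: (uniform_boundedness hemb _ _ _ sc_mem0 (@sc_memL) (@scnormZ) (@scnormD)).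
exact: scnorm_complete.
Qed.

End SequenceClassNorm.

Section SummingOperators.
Context {R : realType} {S : scal R}.
Local Notation K := (sK S).
Local Notation kabs := (kabs S).
Context {emb : {rmorphism R -> K}}.
Hypotheses (hemb : real_embedding emb) (hK : kcomplete S).
Context {X Y : seqclass S} {E F : nspace S} {T : E -> F}.
Hypotheses (sX : is_seqclass X) (sY : is_seqclass Y) (scY : spherically_complete Y).
Hypotheses (hE : banach E) (hF : banach F) (hT : bounded_op T).

Local Notation G := (dual F).
Let bG : banach G := banach_dual hemb hF.1 hK.
Local Notation nX := (scnorm X E).
Local Notation nY := (scnorm Y G).

Lemma bounded_opL a x y : T (a *: x + y) = a *: T x + T y.
Proof. by case: hT => lin _; rewrite lin. Qed.

Lemma bounded_opZ a x : T (a *: x) = a *: T x.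
Proof.
have T0 : T 0 = 0.
  have := bounded_opL 1 0 0; rewrite !scale1r addr0 => h.
  by apply: (@addrI _ (T 0)); rewrite addr0 -h.
by rewrite -[a *: x]addr0 bounded_opL T0 addr0.
Qed.

Lemma bounded_op_bound : exists2 CT, 0 <= CT & forall x, nrm F (T x) <= CT * nrm E x.
Proof.
case: hT => _ [C hC]; exists (Num.max C 0); first by rewrite le_max lexx orbT.
move=> x; apply: le_trans (hC x) _; rewrite ler_wpM2r ?(nrm_ge0 hemb hE.1) //.
by rewrite le_max lexx.
Qed.

Definition tsum (x : nat -> E) (p : nat -> G) n := \sum_(j < n) fapp (p j) (T (x j)).
Definition tsum_abs (x : nat -> E) (p : nat -> G) n := \sum_(j < n) kabs (fapp (p j) (T (x j))).

Lemma tsum_abs_ge0 x p n : 0 <= tsum_abs x p n.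
Proof. by apply: sumr_ge0 => j _; apply: kabs_ge0. Qed.

Lemma le_tsum_abs x p n : kabs (tsum x p n) <= tsum_abs x p n.
Proof. exact: kabs_sum. Qed.

Lemma tsumL a x y p n : tsum (a *: x + y) p n = a * tsum x p n + tsum y p n.
Proof.
by rewrite /tsum mulr_sumr -big_split; apply: eq_bigr => j _; rewrite /= bounded_opL fappL.
Qed.

Lemma tsumLp a x p q n : tsum x (a *: p + q) n = a * tsum x p n + tsum x q n.
Proof. by rewrite /tsum mulr_sumr -big_split. Qed.

Lemma tsum_absZ a x p n : tsum_abs (a *: x) p n = kabs a * tsum_abs x p n.
Proof.
by rewrite /tsum_abs mulr_sumr; apply: eq_bigr => j _; rewrite /= bounded_opZ fappZ (kabsM S).
Qed.

Lemma tsum_absZp a x p n : tsum_abs x (a *: p) n = kabs a * tsum_abs x p n.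
Proof. by rewrite /tsum_abs mulr_sumr; apply: eq_bigr => j _; rewrite fappZl (kabsM S). Qed.

Lemma tsum_rotate x {p} n : sc_mem Y G p ->
  exists p', [/\ sc_mem Y G p', nY p' = nY p & tsum x p' n = emb (tsum_abs x p n)].
Proof.
move=> Yp; have [l hl] := choice (fun j => kabs_rotate hemb (fapp (p j) (T (x j)))).
have [Yp' Np'] := scY _ bG _ l Yp (fun j => (hl j).1).
exists (fun j => l j *: p j); split => //; first by rewrite /scnorm Np'.
by rewrite /tsum /tsum_abs rmorph_sum; apply: eq_bigr => j _; rewrite fappZl (hl j).2.
Qed.

Lemma tsum_abs_le_mul {C} :
  (forall x p n, sc_mem X E x -> nX x <= 1 -> sc_mem Y G p -> nY p <= 1 -> tsum_abs x p n <= C) ->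
  forall x p n, sc_mem X E x -> sc_mem Y G p -> tsum_abs x p n <= C * nX x * nY p.
Proof.
move=> hC x p n Xx Yp.
have in_p x' : sc_mem X E x' -> nX x' <= 1 -> tsum_abs x' p n <= C * nY p.
  move=> Xx' Nx'.
  apply: (le_homogeneous_norm hemb _ (sc_mem Y G) _ (fun q => tsum_abs x' q n)) => //.
  - by move=> a q Yq; apply: sc_memZ.
  - by move=> a q Yq; apply: scnormZ.
  - by move=> a q Yq; apply: tsum_absZp.
  - by move=> q Yq; apply: (scnorm_ge0 hemb).
  - by move=> q Yq Nq; apply: hC.
rewrite mulrAC.
apply: (le_homogeneous_norm hemb _ (sc_mem X E) _ (fun x' => tsum_abs x' p n)) => //.
- by move=> a x' Xx'; apply: sc_memZ.
- by move=> a x' Xx'; apply: scnormZ.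
- by move=> a x' Xx'; apply: tsum_absZ.
- by move=> x' Xx'; apply: (scnorm_ge0 hemb).
Qed.

Lemma summing_tsum_cvg {x p} : summing X (dual_class Y) T -> sc_mem X E x -> sc_mem Y G p ->
  exists l, kcvg (tsum x p) l.
Proof. by move=> hs Xx Yp; apply: hs. Qed.

Lemma summing_tsum_bounded_in_x {p} : summing X (dual_class Y) T -> sc_mem Y G p ->
  exists C, forall n x, sc_mem X E x -> kabs (tsum x p n) <= C * nX x.
Proof.
move=> hs Yp; have [CT CT_ge0 hCT] := bounded_op_bound.
have each_bounded (n : nat) : True ->
    exists C, forall x, sc_mem X E x -> kabs (tsum x p n) <= C * nX x.
  move=> _; exists (\sum_(j < n) nrm G (p j) * CT) => x Xx.
  apply: le_trans (le_tsum_abs _ _ _) _; rewrite mulr_suml; apply: ler_sum => j _.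
  apply: le_trans (le_dual_norm_mul hemb hF.1 _ _) _; rewrite -mulrA.
  apply: ler_wpM2l; first exact: (dual_norm_ge0 hemb hF.1 (p j)).
  apply: le_trans (hCT _) _; apply: ler_wpM2l => //; exact: le_scnorm_coord.
have pointwise x : sc_mem X E x -> exists B, forall n : nat, True -> kabs (tsum x p n) <= B.
  move=> Xx; have [l hl] := summing_tsum_cvg hs Xx Yp.
  by have [B hB] := kcvg_bounded hl; exists B.
have [C hC] := sc_uniform_boundedness hemb sX hE _ _ (fun n x => tsum x p n)
  (fun n _ a x y _ _ => tsumL a x y p n) each_bounded pointwise.
by exists C => n; apply: hC.
Qed.

Lemma summing_tsum_bounded_in_p {x} : summing X (dual_class Y) T -> sc_mem X E x ->
  exists C, forall n p, sc_mem Y G p -> kabs (tsum x p n) <= C * nY p.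
Proof.
move=> hs Xx.
have each_bounded (n : nat) : True ->
    exists C, forall p, sc_mem Y G p -> kabs (tsum x p n) <= C * nY p.
  move=> _; exists (\sum_(j < n) nrm F (T (x j))) => p Yp.
  apply: le_trans (le_tsum_abs _ _ _) _; rewrite mulr_suml; apply: ler_sum => j _.
  apply: le_trans (le_dual_norm_mul hemb hF.1 _ _) _.
  rewrite mulrC ler_wpM2l ?(nrm_ge0 hemb hF.1) //.
  exact: le_scnorm_coord.
have pointwise p : sc_mem Y G p -> exists B, forall n : nat, True -> kabs (tsum x p n) <= B.
  move=> Yp; have [l hl] := summing_tsum_cvg hs Xx Yp.
  by have [B hB] := kcvg_bounded hl; exists B.
have [C hC] := sc_uniform_boundedness hemb sY bG _ _ (fun n p => tsum x p n)
  (fun n _ a p q _ _ => tsumLp a x p q n) each_bounded pointwise.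
by exists C => n; apply: hC.
Qed.

Lemma summing_tsum_abs_bounded : summing X (dual_class Y) T ->
  exists C, forall x p n, sc_mem X E x -> nX x <= 1 -> sc_mem Y G p -> nY p <= 1 ->
    tsum_abs x p n <= C.
Proof.
move=> hs; pose ball_Y (i : (nat -> G) * nat) := sc_mem Y G i.1 /\ nY i.1 <= 1.
have each_bounded i : ball_Y i ->
    exists C, forall x, sc_mem X E x -> kabs (tsum x i.1 i.2) <= C * nX x.
  case: i => p n [Yp _]; have [C hC] := summing_tsum_bounded_in_x hs Yp.
  by exists C => x; apply: hC.
have pointwise x : sc_mem X E x -> exists B, forall i, ball_Y i -> kabs (tsum x i.1 i.2) <= B.
  move=> Xx; have [Cx hCx] := summing_tsum_bounded_in_p hs Xx.
  exists (Num.max Cx 0) => -[p n] [Yp Np] /=; apply: le_trans (hCx n p Yp) _.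
  exact: le_max0_mul (scnorm_ge0 hemb sY bG Yp) Np.
have [C hC] := sc_uniform_boundedness hemb sX hE _ _ (fun i x => tsum x i.1 i.2)
  (fun i _ a x y _ _ => tsumL a x y i.1 i.2) each_bounded pointwise.
exists (Num.max C 0) => x p n Xx Nx Yp Np.
have [p' [Yp' Np' rot]] := tsum_rotate x n Yp.
have := hC (p', n); rewrite /ball_Y /= Np' => /(_ (conj Yp' Np) x Xx).
rewrite rot kabs_emb_ge0 ?tsum_abs_ge0 // => /le_trans; apply.
exact: le_max0_mul (scnorm_ge0 hemb sX hE Xx) Nx.
Qed.

Local Notation sumnormT := (sumnorm X (dual_class Y) T).

Lemma tsum_abs_le_sumnorm x p n : sc_mem X E x -> nX x <= 1 -> sc_mem Y G p -> nY p <= 1 ->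
  ((tsum_abs x p n)%:E <= sumnormT)%E.
Proof.
move=> Xx Nx Yp Np; rewrite /tsum_abs.
apply: le_trans (partial_le_nneseries (fun j => kabs (fapp (p j) (T (x j)))) n
  (fun j => kabs_ge0 S _)) _.
apply: (@le_trans _ _ (sc_norm (dual_class Y) F (T \o x))).
  by apply: ereal_sup_ubound; exists p => //; split => //; rewrite (sc_normE sY bG Yp) lee_fin.
by apply: ereal_sup_ubound; exists x => //; split => //; rewrite (sc_normE sX hE Xx) lee_fin.
Qed.

Lemma sumnorm_le (M : \bar R) :
  (forall x p n, sc_mem X E x -> nX x <= 1 -> sc_mem Y G p -> nY p <= 1 ->
     ((tsum_abs x p n)%:E <= M)%E) -> (sumnormT <= M)%E.
Proof.
move=> hM; apply: ge_ereal_sup => _ [x [Xx Nx] <-]; apply: ge_ereal_sup => _ [p [Yp Np] <-].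
rewrite (sc_normE sX hE Xx) lee_fin in Nx; rewrite (sc_normE sY bG Yp) lee_fin in Np.
by apply: nneseries_ub => [j|n]; [exact: kabs_ge0|exact: hM].
Qed.

Lemma summing_sumnorm_fin : summing X (dual_class Y) T -> exists2 s, 0 <= s & sumnormT = s%:E.
Proof.
move=> hs; have [C hC] := summing_tsum_abs_bounded hs.
have up : (sumnormT <= C%:E)%E by apply: sumnorm_le => *; rewrite lee_fin; apply: hC.
have lo : (0 <= sumnormT)%E.
  have := tsum_abs_le_sumnorm 0 0 0 (sc_mem0 sX hE) _ (sc_mem0 sY bG) _.
  by rewrite /tsum_abs big_ord0 (scnorm0 sX hE) (scnorm0 sY bG) ler01; apply.
exists (fine sumnormT); first exact: fine_ge0.
by rewrite fineK // ge0_fin_numE // (le_lt_trans up) ?ltry.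
Qed.

Local Notation fsts v := (fun j => nth 0 (map fst v) j).
Local Notation snds v := (fun j => nth 0 (map snd v) j).
Local Notation alpha := (alphaXY X Y E G).

Lemma phiT_tens_eq {u v : tens E G} : tens_eq u v -> phiT T u = phiT T v.
Proof.
move=> h; apply: (h (fun x p => fapp p (T x))); split => [y a x1 x2|x a p q] //=.
by rewrite bounded_opL fappL.
Qed.

Lemma phiT_nil : phiT T [::] = 0.
Proof. by rewrite /phiT big_nil. Qed.

Lemma phiT_scale c (u : tens E G) : phiT T (tens_scale c u) = c * phiT T u.
Proof. by rewrite /phiT big_map mulr_sumr; apply: eq_bigr => p _; rewrite /= bounded_opZ fappZ. Qed.

Lemma phiT_sub (u v : tens E G) : phiT T (tens_sub u v) = phiT T u - phiT T v.
Proof. by rewrite /tens_sub {1}/phiT big_cat -/(phiT T u) -/(phiT T _) phiT_scale mulN1r. Qed.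

Lemma phiT_tsum (v : tens E G) : phiT T v = tsum (fsts v) (snds v) (size v).
Proof.
rewrite /phiT (big_nth (0, 0)) big_mkord; apply: eq_bigr => -[j hj] _.
by rewrite /= !(nth_map (0, 0)).
Qed.

Lemma sc_mem_fsts (v : tens E G) : sc_mem X E (fsts v).
Proof.
by apply: sc_mem_finsupp => //; exists (size v) => j hj; rewrite nth_default // size_map.
Qed.

Lemma sc_mem_snds (v : tens E G) : sc_mem Y G (snds v).
Proof.
by apply: sc_mem_finsupp => //; exists (size v) => j hj; rewrite nth_default // size_map.
Qed.

Lemma tens_eq_refl (u : tens E G) : tens_eq u u.
Proof. by []. Qed.

Lemma alpha_le {u v : tens E G} : tens_eq v u -> (alpha u <= (nX (fsts v) * nY (snds v))%:E)%E.
Proof.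
move=> vu; apply: ereal_inf_lbound; exists v => //.
by rewrite (sc_normE sX hE (sc_mem_fsts v)) (sc_normE sY bG (sc_mem_snds v)).
Qed.

Lemma alpha_ge0 (u : tens E G) : (0 <= alpha u)%E.
Proof.
apply: le_ereal_inf_tmp => _ [v _ <-].
rewrite (sc_normE sX hE (sc_mem_fsts v)) (sc_normE sY bG (sc_mem_snds v)) -EFinM lee_fin.
by apply: mulr_ge0; apply: (scnorm_ge0 hemb) => //; [apply: sc_mem_fsts|apply: sc_mem_snds].
Qed.

Lemma alpha_fin (u : tens E G) : alpha u \is a fin_num.
Proof. by rewrite ge0_fin_numE ?alpha_ge0 // (le_lt_trans (alpha_le (tens_eq_refl u))) ?ltry. Qed.

Lemma phiT_le_alpha {s} : 0 <= s ->
  (forall x p n, sc_mem X E x -> sc_mem Y G p -> tsum_abs x p n <= s * nX x * nY p) ->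
  forall u, ((kabs (phiT T u))%:E <= s%:E * alpha u)%E.
Proof.
move=> s_ge0 hs u.
have along v : tens_eq v u -> kabs (phiT T u) <= s * (nX (fsts v) * nY (snds v)).
  move=> vu; rewrite -(phiT_tens_eq vu) phiT_tsum mulrA.
  by apply: le_trans (le_tsum_abs _ _ _) (hs _ _ _ (sc_mem_fsts v) (sc_mem_snds v)).
have [s0|s_neq0] := eqVneq s 0.
  have := along u (tens_eq_refl u); rewrite s0 mul0r => phi_le0.
  by rewrite mul0e lee_fin.
have s_gt0 : 0 < s by rewrite lt_def s_neq0.
apply: (@le_trans _ _ (s%:E * (kabs (phiT T u) / s)%:E)%E).
  by rewrite -EFinM lee_fin mulrC divfK ?gt_eqF.
apply: lee_wpmul2l; first by rewrite lee_fin.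
apply: le_ereal_inf_tmp => _ [v vu <-].
rewrite (sc_normE sX hE (sc_mem_fsts v)) (sc_normE sY bG (sc_mem_snds v)) -EFinM lee_fin.
by rewrite ler_pdivrMr // mulrC; apply: along.
Qed.

Lemma summing_phiT_continuous : summing X (dual_class Y) T ->
  qcontinuous alpha (phiT T) /\ (qfnorm alpha (phiT T) <= sumnormT)%E.
Proof.
move=> hs; have [s s_ge0 sE] := summing_sumnorm_fin hs.
have ball_le x p n : sc_mem X E x -> nX x <= 1 -> sc_mem Y G p -> nY p <= 1 -> tsum_abs x p n <= s.
  by move=> *; rewrite -lee_fin -sE; apply: tsum_abs_le_sumnorm.
have phi_le := phiT_le_alpha s_ge0 (tsum_abs_le_mul ball_le).
split.
  move=> u0 e e0; exists (e / (s + 1)); first by rewrite divr_gt0 // ltr_wpDl.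
  move=> u; rewrite -phiT_sub; have := phi_le (tens_sub u u0).
  rewrite -(fineK (alpha_fin (tens_sub u u0))) -EFinM !lte_fin lee_fin => le_phi lt_alpha.
  apply: le_lt_trans le_phi _; apply: le_lt_trans (_ : s * (e / (s + 1)) < e).
    by rewrite ler_wpM2l // ltW.
  by rewrite mulrA ltr_pdivrMr ?ltr_wpDl // mulrDr mulr1 mulrC ltrDl.
apply: ge_ereal_sup => _ [u u_le1 <-]; apply: le_trans (phi_le u) _.
by rewrite sE -[leRHS]mule1 lee_wpmul2l ?lee_fin.
Qed.

Definition tens_of (x : nat -> E) (p : nat -> G) n : tens E G := [seq (x j, p j) | j <- iota 0 n].

Lemma nth_map_tens_of (V : zmodType) (h : E * G -> V) x p n j :
  nth 0 (map h (tens_of x p n)) j = if (j < n)%N then h (x j, p j) else 0.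
Proof.
rewrite /tens_of -map_comp; case: ltnP => hj.
  by rewrite (nth_map 0%N) ?size_iota // nth_iota.
by rewrite nth_default // size_map size_iota.
Qed.

Lemma fsts_tens_of x p n : fsts (tens_of x p n) = Defs.trunc n x.
Proof. by apply: funext => j; rewrite nth_map_tens_of. Qed.

Lemma snds_tens_of x p n : snds (tens_of x p n) = Defs.trunc n p.
Proof. by apply: funext => j; rewrite nth_map_tens_of. Qed.

Lemma phiT_tens_of x p n : phiT T (tens_of x p n) = tsum x p n.
Proof.
rewrite /phiT big_map /tsum -(big_mkord xpredT (fun j => fapp (p j) (T (x j)))).
by rewrite /index_iota subn0.
Qed.

Section FinitelyDetermined.
Hypotheses (fX : fin_determined X \/ fin_dominated X) (fY : fin_determined Y \/ fin_dominated Y).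

Lemma alpha_tens_of_le x p n : sc_mem X E x -> sc_mem Y G p ->
  (alpha (tens_of x p n) <= (nX x * nY p)%:E)%E.
Proof.
move=> Xx Yp; apply: le_trans (alpha_le (tens_eq_refl _)) _.
rewrite fsts_tens_of snds_tens_of lee_fin; apply: ler_pM.
- exact: (scnorm_ge0 hemb sX hE (sc_mem_trunc sX hE _ _)).
- exact: (scnorm_ge0 hemb sY bG (sc_mem_trunc sY bG _ _)).
- exact: scnorm_trunc_le.
- exact: scnorm_trunc_le.
Qed.

Lemma sumnorm_le_qfnorm : (sumnormT <= qfnorm alpha (phiT T))%E.
Proof.
apply: sumnorm_le => x p n Xx Nx Yp Np; have [p' [Yp' Np' rot]] := tsum_rotate x n Yp.
apply: ereal_sup_ubound; exists (tens_of x p' n).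
  apply: le_trans (alpha_tens_of_le _ _ n Xx Yp') _; rewrite lee_fin Np'.
  by apply: mulr_ile1 => //; apply: (scnorm_ge0 hemb).
by rewrite phiT_tens_of rot kabs_emb_ge0 // tsum_abs_ge0.
Qed.

Lemma phiT_bounded_summing {C} : 0 <= C -> (forall u, kabs (phiT T u) <= C * fine (alpha u)) ->
  summing X (dual_class Y) T.
Proof.
move=> C_ge0 hC x Xx p Yp; apply: (abs_bounded_series_cvg hemb hK _ (C * nX x * nY p)) => n.
have [p' [Yp' Np' rot]] := tsum_rotate x n Yp.
have := hC (tens_of x p' n); rewrite phiT_tens_of rot kabs_emb_ge0 ?tsum_abs_ge0 // => /le_trans.
apply; rewrite -mulrA -Np' ler_wpM2l //.
by have := alpha_tens_of_le _ _ n Xx Yp'; rewrite -(fineK (alpha_fin _)) lee_fin.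
Qed.

End FinitelyDetermined.

Lemma qcontinuous_phiT_bound : reasonable_qnorm alpha -> qcontinuous alpha (phiT T) ->
  exists2 C, 0 <= C & forall u, kabs (phiT T u) <= C * fine (alpha u).
Proof.
case=> -[_ _ alpha_eq0 alphaZ _] _ _ cont; have [d d_gt0 hd] := cont [::] 1 ltr01.
exists (2 / d) => [|u]; first by rewrite divr_ge0 // ltW.
have a_ge0 : 0 <= fine (alpha u) by apply/fine_ge0/alpha_ge0.
have [a0|a_neq0] := eqVneq (fine (alpha u)) 0.
  have /alpha_eq0 u0 : alpha u = 0%E by rewrite -(fineK (alpha_fin u)) a0.
  by rewrite (phiT_tens_eq u0) phiT_nil (kabs0 S) a0 mulr0.
have a_gt0 : 0 < fine (alpha u) by rewrite lt_def a_neq0.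
pose c := d / (2 * fine (alpha u)).
have c_gt0 : 0 < c by rewrite divr_gt0 ?mulr_gt0.
have half_lt : d / 2 < d by lra.
have alpha_v : alpha (tens_sub (tens_scale (emb c) u) [::]) = (d / 2)%:E.
  rewrite /tens_sub /= cats0 alphaZ (kabs_emb_ge0 hemb _ (ltW c_gt0)) -(fineK (alpha_fin u)) -EFinM.
  by rewrite /c; congr (_%:E); field; rewrite gt_eqF.
have := hd (tens_scale (emb c) u); rewrite alpha_v lte_fin phiT_nil subr0 phiT_scale.
rewrite (kabsM S) (kabs_emb_ge0 hemb _ (ltW c_gt0)) => /(_ half_lt)/ltW small.
rewrite -(ler_pM2l c_gt0) (_ : c * (2 / d * fine (alpha u)) = 1) // /c.
by field; rewrite !gt_eqF.
Qed.

End SummingOperators.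

Local Open Scope ereal_scope.

Theorem lemma2p4 (R : realType) (S : scal R)
  (HS : S = realS R \/ S = complexS R)
  (X Y : seqclass S)
  (sX : is_seqclass X) (sY : is_seqclass Y)
  (lsX : linearly_stable X) (lsY : linearly_stable Y)
  (scY : spherically_complete Y)
  (hXY : forall x : nat -> (@kspace R S),
     sc_mem X kspace x ->
     sc_mem (dual_class Y) kspace x /\
     sc_norm (dual_class Y) kspace x <= sc_norm X kspace x)
  (E F : nspace S) (hE : banach E) (hF : banach F)
  (T : E -> F) (hT : bounded_op T)
  (halpha : reasonable_qnorm (alphaXY X Y E (dual F))) :
  (* (a) *)
  (summing X (dual_class Y) T ->
     qcontinuous (alphaXY X Y E (dual F)) (phiT T) /\
     qfnorm (alphaXY X Y E (dual F)) (phiT T) <= sumnorm X (dual_class Y) T) /\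
  (* (b) *)
  ((fin_determined X \/ fin_dominated X) ->
   (fin_determined Y \/ fin_dominated Y) ->
     (qcontinuous (alphaXY X Y E (dual F)) (phiT T) <-> summing X (dual_class Y) T) /\
     (summing X (dual_class Y) T ->
        sumnorm X (dual_class Y) T = qfnorm (alphaXY X Y E (dual F)) (phiT T))).
Proof.
have [emb hemb hK] := scal_standard S HS.
have part_a := summing_phiT_continuous hemb hK sX sY scY hE hF hT.
split=> // fX fY; split.
  split=> [cont|/part_a[] //].
  have [C C_ge0 hC] := qcontinuous_phiT_bound hemb hK sX sY hE hF hT halpha cont.
  exact (phiT_bounded_summing hemb hK sX sY scY hE hF fX fY C_ge0 hC).
move=> /part_a[_ qfnorm_le]; apply/eqP; rewrite eq_le qfnorm_le andbT.
exact (sumnorm_le_qfnorm hemb hK sX sY scY hE hF fX fY).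
Qed.
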